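(* Let $\mathcal G$ be a rooted digraph, $T>0$, $r\in(0,1)^N$, $i^*$ a root of $\mathcal G$, and $\xi=\phi_1\phi_2\cdots\in\Xi$ such that $\phi_{k_0}\phi_{k_0+1}\cdots\phi_{k_0+q^*\ell^*-1}=\zeta$ for some $k_0\in\mathbb Z_{\ge1}$, where $\zeta$ is the synchronization string w.r.t. $i^*$. Let $x=(\tau,\lambda)$ be a maximal solution of $\mathcal H_\xi$ with $\lambda(0,0)=0$ and $\tau(0,0)\in[0,1]^N$. For $q=0,\dots,q^*$ let $k_q:=k_0+q\ell^*$ and $t_q:=\min\{t\ge0:(t,k_q)\in\operatorname{dom}(x)\}$. Then for each $q=0,\dots,q^*-1$ there exists $(t'_q,k'_q)\in\operatorname{dom}(x)$ with $(t_q,k_q)\preceq(t'_q,k'_q)\preceq(t_{q+1},k_{q+1}-1)$ such that $\tau(t'_q,k'_q)\in\mathcal A_{q+1}(i^* )$; moreover $\tau(t,k)\in\mathcal A_{q+1}(i^* )$ for all $(t,k)\in\operatorname{dom}(x)$ with $(t,k)\succeq(t'_q,k'_q)$.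
   Context: $\mathcal G=(\mathcal V,\mathcal E)$ is a simple digraph on $\mathcal V=\{1,\dots,N\}$; $(i,j)\in\mathcal E$ means $j$ is an out-neighbor of $i$; $\mathcal E_i^-$ is the set of out-edges of $i$. A path is a sequence of pairwise distinct vertices with consecutive pairs in $\mathcal E$, its length the number of edges. A root is a vertex from which every other vertex is reachable; rooted means a root exists. For the root $i^*$, $\mathcal V_q(i^* )$ is the set of vertices at shortest-path distance $q$ from $i^*$, $q^*$ the maximal distance, $\mathcal U_q(i^* )=\bigcup_{l=0}^q\mathcal V_l(i^* )$. $\underline r=\min_ir_i$, $\ell^*:=N(\lfloor1/\underline r\rfloor+1)$. A subgraph $(\mathcal V,\mathcal E')$, $\mathcal E'\subseteq\mathcal E$, is feasible if for every $i$ either $\mathcal E_i^-\subseteq\mathcal E'$ or $\mathcal E_i^-\cap\mathcal E'=\varnothing$. $\Xi$ is the set of infinite sequences of feasible subgraphs, $\phi_\lambda=(\mathcal V,\mathcal E_\lambda)$. With $\mathcal G_q=(\mathcal V,\bigcup_{i\in\mathcal V_q(i^* )}\mathcal E_i^-)$, the synchronization string w.r.t. $i^*$ is $\zeta=\mathcal G_0\cdots\mathcal G_0\cdots\mathcal G_{q^*-1}\cdots\mathcal G_{q^*-1}$, each $\mathcal G_q$ repeated consecutively $\ell^*$ times. Hybrid system $\mathcal H_\xi$: state $x=(\tau,\lambda)\in\mathbb R^N_{\ge0}\times\mathbb Z_{\ge0}$; flow set $C=[0,1]^N\times\mathbb Z_{\ge0}$ with $\dot\tau=\frac1T\mathbf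 1_N$, $\dot\lambda=0$; jump set $D=\{\tau\in[0,1]^N:\max_i\tau_i=1\}\times\mathbb Z_{\ge0}$ with $x^+\in G_{\lambda+1}(\tau)\times\{\lambda+1\}$, where $G_\lambda$ is the outer-semicontinuous hull of $G_\lambda^0(\tau)=\{g:g_i=0,\ g_j\in\mathcal R_{j,\lambda}(\tau)\ \forall j\ne i\}$, $i$ an agent with $\tau_i=1$, and $\mathcal R_{j,\lambda}(\tau)=\{0\}$, $\{0,1\}$, $\{1\}$ if $(i,j)\in\mathcal E_\lambda$ and $\tau_j<r_j$, $=r_j$, $>r_j$ respectively, and $\{\tau_j\}$ if $(i,j)\notin\mathcal E_\lambda$. Solutions are hybrid arcs on hybrid time domains (unions of $[t_k,t_{k+1}]\times\{k\}$) that flow in $C$ according to the flow map and jump from $D$ via the jump map; maximal means not properly extendable. $(t_1,k_1)\preceq(t_2,k_2)$ means $t_1\le t_2$, $k_1\le k_2$. $\mathcal A_q(i^* )$ is the set of $\tau\in[0,1]^N$ such that the subvector $(\tau_j)_{j\in\mathcal U_q(i^* )}$ either has all entries equal or has all entries in $\{0,1\}$ (entries of $\tau$ outside $\mathcal U_q(i^* )$ arbitrary in $[0,1]$). *)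

From Stdlib Require Import Reals.
From mathcomp Require Import all_boot.

Set Implicit Arguments.
Unset Strict Implicit.
Unset Printing Implicit Defensive.

Local Open Scope R_scope.

Section Defs.
Variable N : nat.
Notation V := 'I_N.

(* Graph notions.  E : rel V, E i j  <->  (i,j) is an edge, i.e. j is an
   out-neighbor of i.                                                   *)

(* s is (the tail of) a path i = v0, v1, ..., vm = j : consecutive pairs are
   edges, vertices pairwise distinct; its length is size s.             *)
Definition is_path (E : rel V) (i j : V) (s : seq V) : Prop :=
  path E i s /\ uniq (i :: s) /\ last i s = j.

Definition is_root (E : rel V) (i : V) : Prop :=
  forall j : V, exists s, is_path E i j s.

Definition dist_is (E : rel V) (i j : V) (q : nat) : Prop :=
  (exists s, is_path E i j s /\ size s = q) /\
  (forall s, is_path E i j s -> (q <= size s)%nat).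

Definition in_Vq (E : rel V) (i : V) (q : nat) (j : V) : Prop := dist_is E i j q.

Definition in_Uq (E : rel V) (i : V) (q : nat) (j : V) : Prop :=
  exists l, (l <= q)%nat /\ in_Vq E i l j.

Definition is_max_dist (E : rel V) (i : V) (qs : nat) : Prop :=
  (exists j, dist_is E i j qs) /\ (forall j q, dist_is E i j q -> (q <= qs)%nat).

(* r_min = min_i r_i and l^* = N (floor(1/r_min) + 1).
   Int_part is the floor function of the Stdlib reals (up x - 1).     *)
Definition rmin (r : V -> R) : R :=
  let s := [seq r i | i <- enum V] in foldr Rmin (head 0 s) s.

Definition lstar (r : V -> R) : nat :=
  (N * (Z.to_nat (Int_part (/ rmin r)) + 1))%nat.

(* Subgraphs (V, E') are represented by their edge sets E' : V -> V -> Prop. *)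

Definition feasible (E : rel V) (E' : V -> V -> Prop) : Prop :=
  (forall a b, E' a b -> E a b) /\
  (forall i, (forall j, E i j -> E' i j) \/ (forall j, ~ E' i j)).

(* xi = phi_1 phi_2 ... in Xi ; xi k is the edge set of phi_k (k >= 1;
   the entry xi 0 is unused). *)
Definition in_Xi (E : rel V) (xi : nat -> V -> V -> Prop) : Prop :=
  forall k, (1 <= k)%nat -> feasible E (xi k).

Definition Gq (E : rel V) (istar : V) (q : nat) (a b : V) : Prop :=
  E a b /\ in_Vq E istar q a.

(* phi_{k0} ... phi_{k0 + q* l* - 1} = zeta  (zeta = G_0^{l*} ... G_{q*-1}^{l*}) *)
Definition sync_at (E : rel V) (istar : V) (qs ls : nat)
    (xi : nat -> V -> V -> Prop) (k0 : nat) : Prop :=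
  forall q p, (q < qs)%nat -> (p < ls)%nat ->
    forall a b, xi (k0 + q * ls + p)%nat a b <-> Gq E istar q a b.

Definition in_unit_cube (tau : V -> R) : Prop := forall a, 0 <= tau a <= 1.

(* flow set C (tau-component; lambda ranges over all of Z_{>=0}) *)
Definition inC (tau : V -> R) : Prop := in_unit_cube tau.

Definition inD (tau : V -> R) : Prop := in_unit_cube tau /\ exists i, tau i = 1.

Definition Rset (r : V -> R) (El : V -> V -> Prop) (i j : V) (tau : V -> R)
    (g : R) : Prop :=
  (El i j /\
     ((tau j < r j /\ g = 0) \/
      (tau j = r j /\ (g = 0 \/ g = 1)) \/
      (tau j > r j /\ g = 1))) \/
  (~ El i j /\ g = tau j).

Definition G0 (r : V -> R) (xi : nat -> V -> V -> Prop) (l : nat)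
    (tau g : V -> R) : Prop :=
  in_unit_cube tau /\
  exists i, tau i = 1 /\ g i = 0 /\
    forall j, j != i -> Rset r (xi l) i j tau (g j).

(* G_lambda: outer-semicontinuous hull of G^0_lambda, i.e. the set-valued
   map whose graph is the closure of the graph of G^0_lambda. *)
Definition Ghull (r : V -> R) (xi : nat -> V -> V -> Prop) (l : nat)
    (tau g : V -> R) : Prop :=
  forall eps, 0 < eps -> exists tau' g',
    G0 r xi l tau' g' /\
    (forall a, Rabs (tau' a - tau a) < eps) /\
    (forall a, Rabs (g' a - g a) < eps).

Definition compact_htd (Ed : R -> nat -> Prop) : Prop :=
  exists (J : nat) (t : nat -> R),
    t O = 0 /\ (forall j, (j < J)%nat -> t j <= t j.+1) /\
    forall s j, Ed s j <-> ((j < J)%nat /\ t j <= s <= t j.+1).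

Definition htd (dom : R -> nat -> Prop) : Prop :=
  forall T' J', dom T' J' ->
    compact_htd (fun s j => dom s j /\ s <= T' /\ (j <= J')%nat).

Definition interior_pt (dom : R -> nat -> Prop) (j : nat) (s : R) : Prop :=
  exists e, 0 < e /\ forall u, Rabs (u - s) < e -> dom u j.

Definition is_solution (T : R) (r : V -> R) (xi : nat -> V -> V -> Prop)
    (dom : R -> nat -> Prop) (tau : R -> nat -> V -> R) (lam : R -> nat -> nat)
    : Prop :=
  htd dom /\
  dom 0 O /\
  inC (tau 0 O) /\
  (forall j s, dom s j -> forall a, forall e, 0 < e -> exists d, 0 < d /\
       forall u, dom u j -> Rabs (u - s) < d -> Rabs (tau u j a - tau s j a) < e) /\
  (forall j s, interior_pt dom j s ->
       inC (tau s j) /\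
       forall a, derivable_pt_lim (fun u => tau u j a) s (/ T)) /\
  (forall j s u, dom s j -> dom u j -> lam s j = lam u j) /\
  (forall t j, dom t j -> dom t j.+1 ->
       inD (tau t j) /\
       Ghull r xi (lam t j).+1 (tau t j) (tau t j.+1) /\
       lam t j.+1 = (lam t j).+1).

Definition is_maximal_solution (T : R) (r : V -> R) (xi : nat -> V -> V -> Prop)
    (dom : R -> nat -> Prop) (tau : R -> nat -> V -> R) (lam : R -> nat -> nat)
    : Prop :=
  is_solution T r xi dom tau lam /\
  forall dom' tau' lam',
    is_solution T r xi dom' tau' lam' ->
    (forall t j, dom t j -> dom' t j /\ tau' t j = tau t j /\ lam' t j = lam t j) ->
    forall t j, dom' t j -> dom t j.

Definition is_min_time (dom : R -> nat -> Prop) (k : nat) (tq : R) : Prop :=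
  dom tq k /\ forall t, 0 <= t -> dom t k -> tq <= t.

Definition in_Aq (E : rel V) (istar : V) (q : nat) (tau : V -> R) : Prop :=
  in_unit_cube tau /\
  ((forall a b, in_Uq E istar q a -> in_Uq E istar q b -> tau a = tau b) \/
   (forall a, in_Uq E istar q a -> tau a = 0 \/ tau a = 1)).

End Defs.

(* Between jumps all timers grow with slope 1/T inside [0,1]^N, and on the jump set the
   outer-semicontinuous hull G_lambda agrees with G^0_lambda.
   During stage q of the synchronization string only the agents of V_q reset their
   out-neighbours, so up to the end of stage q no reset edge enters U_q from outside; since
   flows preserve both alternatives defining A_q, A_q then survives every flow and every jump.
   Assume A_q holds throughout stage q (it does for q = 0, as U_0 = {i*}). Follow an agent u0 of
   U_q with the smallest timer: until u0 reaches 1, every firing agent is reset to 0 and then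
   stays below u0, so the firing agents are pairwise distinct and differ from u0; within N jumps
   u0, and with it all of U_q, is at 1. From then on no time flows while an agent of V_q is still
   at 1, so the agents of V_q fire one after the other within N further jumps, each putting its
   out-neighbours into {0,1}; as every vertex of V_{q+1} has an in-neighbour in V_q, this gives
   A_{q+1}. Afterwards A_{q+1}
   persists through stages q and q+1, and from stage q+2 on it follows from A_{q+2} (after the
   last stage, from U_{q*} being all of V). *)

From Pilot Require Import Defs.
From Stdlib Require Import Reals Lra Lia Classical ClassicalEpsilon FunctionalExtensionality.
From mathcomp Require Import all_boot zify.

Set Implicit Arguments.
Unset Strict Implicit.
Unset Printing Implicit Defensive.
Local Open Scope R_scope.

Lemma Rabs_sub_lt_all_eq (x y : R) : (forall e, 0 < e -> Rabs (x - y) < e) -> x = y.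
Proof.
move=> H; apply: NNPP => hxy.
have hpos : 0 < Rabs (x - y) by apply: Rabs_pos_lt; lra.
have := H _ hpos; lra.
Qed.

Lemma near_0_or_1_eq (g : R) :
  (forall e, 0 < e -> Rabs g < e \/ Rabs (g - 1) < e) -> g = 0 \/ g = 1.
Proof.
move=> H; apply: NNPP => hg.
have p0 : 0 < Rabs g by apply: Rabs_pos_lt => g0; apply: hg; left.
have p1 : 0 < Rabs (g - 1) by apply: Rabs_pos_lt => g1; apply: hg; right; lra.
have := Rmin_l (Rabs g) (Rabs (g - 1)); have := Rmin_r (Rabs g) (Rabs (g - 1)).
by case: (H _ (Rmin_pos _ _ p0 p1)) => ? ? ?; lra.
Qed.

Section Distance.
Variables (N : nat) (E : rel 'I_N) (i : 'I_N).

Lemma Uq0_root a : in_Uq E i 0 a -> a = i.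
Proof.
move=> [l [hl [[s [[_ [_ ls]] sz]] _]]].
by case: s ls sz => [|? ?] /= <- //; lia.
Qed.

Lemma root_Uq q : in_Uq E i q i.
Proof. by exists 0%N; split=> //; split=> [|s _]; [exists [::] | lia]. Qed.

Lemma Vq_Uq q a : in_Vq E i q a -> in_Uq E i q a.
Proof. by exists q. Qed.

Lemma Uq_mono m m' a : (m <= m')%N -> in_Uq E i m a -> in_Uq E i m' a.
Proof. by move=> hm [l [hl hv]]; exists l; split=> //; lia. Qed.

Lemma UqS_split q b : in_Uq E i q.+1 b -> in_Uq E i q b \/ in_Vq E i q.+1 b.
Proof.
move=> [l [hl hv]]; case: (l =P q.+1) hv => [-> | ne] hv; first by right.
by left; exists l; split=> //; lia.
Qed.

Lemma dist_exists j : is_root E i -> exists l, dist_is E i j l.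
Proof.
move=> /(_ j) [s ps].
have [n] : exists n, exists2 s, is_path E i j s & size s = n by exists (size s), s.
clear ps; elim/ltn_ind: n => n IH [{}s ps sz].
case: (classic (exists2 s', is_path E i j s' & (size s' < n)%N)) => [[s' ps' lt] | hmin].
  by apply: (IH (size s')) => //; exists s'.
exists n; split=> [|s' ps']; first by exists s.
by rewrite leqNgt; apply/negP => lt; apply: hmin; exists s'.
Qed.

Lemma Uq_max_dist qs a : is_root E i -> is_max_dist E i qs -> in_Uq E i qs a.
Proof.
by move=> hr [_ hmax]; have [l hl] := dist_exists a hr; exists l; split=> //; apply: hmax hl.
Qed.

Lemma VqS_pred q b : in_Vq E i q.+1 b -> exists2 v, in_Vq E i q v & E v b.
Proof.
move=> [[s [[ps [us ls]] sz]] hmin].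
case/lastP: s ps us ls sz => [|s x] // ps us ls sz.
rewrite last_rcons in ls; subst x.
move: ps; rewrite rcons_path => /andP [ps eb].
move: us; rewrite -rcons_cons rcons_uniq => /andP [_ us].
rewrite size_rcons in sz.
exists (last i s) => //; split; first by exists s; split=> //; lia.
move=> s' [ps' [_ ls']]; rewrite leqNgt; apply/negP => hlt.
have pb : path E i (rcons s' b) by rewrite rcons_path ps' ls' eb.
have : last i (rcons s' b) = b by rewrite last_rcons.
case: (shortenP pb) => p pp up sub lp.
have := uniq_leq_size (proj2 (andP up)) sub; rewrite size_rcons.
move: (hmin p (conj pp (conj up lp))) => /leq_trans h /h.
by rewrite ltnS leqNgt hlt.
Qed.

End Distance.

Lemma rmin_attained (N : nat) (r : 'I_N -> R) (i0 : 'I_N) : exists i, rmin r = r i.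
Proof.
rewrite /rmin; have : i0 \in enum 'I_N by rewrite mem_enum.
case: (enum 'I_N) => [|a s] //= _.
suff [i ->] : exists i, foldr Rmin (r a) [seq r i | i <- s] = r i.
  by rewrite /Rmin; case: Rle_dec => _; [exists a | exists i].
elim: s => [|b s [i IH]] /=; first by exists a.
by rewrite IH /Rmin; case: Rle_dec => _; [exists b | exists i].
Qed.

Lemma lstar_ge_2N (N : nat) (r : 'I_N -> R) (i0 : 'I_N) :
  (forall i, 0 < r i < 1) -> (2 * N <= lstar r)%N.
Proof.
move=> r01; rewrite /lstar; have [i ->] := rmin_attained r i0.
have inv_gt1 : 1 < / r i by rewrite -Rinv_1; apply: Rinv_lt_contravar; have := r01 i; nra.
have floor_ge1 : (1 <= Z.to_nat (Int_part (/ r i)))%N.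
  rewrite /Int_part; case: (archimed (/ r i)) => hup _.
  have : (1 < up (/ r i))%Z by apply: lt_IZR; lra.
  lia.
by rewrite mulnC leq_mul // addn1 ltnS.
Qed.

Section ResetMap.
Variables (N : nat) (r : 'I_N -> R).
Hypothesis r01 : forall i, 0 < r i < 1.
Implicit Types (El : 'I_N -> 'I_N -> Prop) (y : 'I_N -> R) (g : R).

Lemma Rset_edge01 El i j y g : Defs.Rset r El i j y g -> El i j -> g = 0 \/ g = 1.
Proof. by case=> [[_ [[_ ->] | [[_ h] | [_ ->]]]] | [h _]] he; tauto. Qed.

Lemma Rset_nonedge El i j y g : Defs.Rset r El i j y g -> ~ El i j -> g = y j.
Proof. by case=> [[h _] | [_ ->]] he //; case: he. Qed.

Lemma Rset_at0 El i j y g : Defs.Rset r El i j y g -> y j = 0 -> g = 0.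
Proof.
move=> hR hy; have := r01 j.
by case: hR => [[_ [[_ ->] | [[h _] | [h _]]]] | [_ ->]] //; lra.
Qed.

Lemma Rset_at1 El i j y g : Defs.Rset r El i j y g -> y j = 1 -> g = 1.
Proof.
move=> hR hy; have := r01 j.
by case: hR => [[_ [[h _] | [[h _] | [_ ->]]]] | [_ ->]] //; lra.
Qed.

Lemma Rset_01 El i j y g : Defs.Rset r El i j y g -> y j = 0 \/ y j = 1 -> g = 0 \/ g = 1.
Proof. by move=> h [h0 | h1]; [left; apply: Rset_at0 h h0 | right; apply: Rset_at1 h h1]. Qed.

Lemma Rset_eq_edge El El' i j y g :
  (El i j <-> El' i j) -> Defs.Rset r El i j y g -> Defs.Rset r El' i j y g.
Proof. by move=> e [[h1 h2] | [h1 h2]]; [left | right]; tauto. Qed.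

Lemma Rset_cube El i j y g : Defs.Rset r El i j y g -> 0 <= y j <= 1 -> 0 <= g <= 1.
Proof.
move=> h hy; case: (classic (El i j)) => he.
  by case: (Rset_edge01 h he) => ->; lra.
by rewrite (Rset_nonedge h he).
Qed.

Lemma Rset_closed El i j y g :
  (forall e, 0 < e -> exists y' g',
     Defs.Rset r El i j y' g' /\ Rabs (y' j - y j) < e /\ Rabs (g' - g) < e) ->
  Defs.Rset r El i j y g.
Proof.
move=> approx; case: (classic (El i j)) => he; last first.
  right; split=> //; apply: Rabs_sub_lt_all_eq => e he'.
  have [y' [g' [hR [/Rabs_def2 hy /Rabs_def2 hg]]]] := approx (e / 2) ltac:(lra).
  rewrite (Rset_nonedge hR he) in hg.
  by apply: Rabs_def1; lra.
left; split=> //.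
case: (Rtotal_order (y j) (r j)) => [lt | [eq | gt]].
- left; split=> //; apply: Rabs_sub_lt_all_eq => e he'; rewrite Rminus_0_r.
  have [y' [g' [hR [/Rabs_def2 hy /Rabs_def2 hg]]]] :=
    approx _ (Rmin_pos _ _ he' (ltac:(lra) : 0 < r j - y j)).
  have := Rmin_l e (r j - y j); have := Rmin_r e (r j - y j) => m1 m2.
  case: hR => [[_ [[_ g0] | [[h _] | [h _]]]] | [] //]; try lra.
  by rewrite g0 in hg; apply: Rabs_def1; lra.
- right; left; split=> //; apply: near_0_or_1_eq => e he'.
  have [y' [g' [hR [_ hg]]]] := approx e he'.
  case: (Rset_edge01 hR he) hg => ->; rewrite ?Rminus_0_l ?Rabs_Ropp => hg.
    by left.
  by right; rewrite Rabs_minus_sym.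
- right; right; split=> //; apply: Rabs_sub_lt_all_eq => e he'.
  have [y' [g' [hR [/Rabs_def2 hy /Rabs_def2 hg]]]] :=
    approx _ (Rmin_pos _ _ he' (ltac:(lra) : 0 < y j - r j)).
  have := Rmin_l e (y j - r j); have := Rmin_r e (y j - r j) => m1 m2.
  case: hR => [[_ [[h _] | [[h _] | [_ g1]]]] | [] //]; try lra.
  by rewrite g1 in hg; apply: Rabs_def1; lra.
Qed.

End ResetMap.

Lemma exists_uniform_index (T : finType) (P : T -> R -> Prop) :
  (forall i e e', e <= e' -> P i e -> P i e') ->
  (forall e, 0 < e -> exists i, P i e) -> exists i, forall e, 0 < e -> P i e.
Proof.
move=> mono hP; apply: NNPP => hnone.
have bad i : exists2 e, 0 < e & ~ P i e.
  apply: NNPP => h; apply: hnone; exists i => e he.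
  by apply: NNPP => hn; apply: h; exists e.
have [e he hs] : exists2 e, 0 < e & forall i, i \in enum T -> ~ P i e.
  elim: (enum T) => [|a s [e he hs]]; first by exists 1; [lra | ].
  have [ea hea hna] := bad a.
  exists (Rmin e ea); first exact: Rmin_pos.
  move=> i; rewrite inE => /orP [/eqP -> | hi] hPi.
    by apply: hna; apply: mono hPi; apply: Rmin_r.
  by apply: (hs i hi); apply: mono hPi; apply: Rmin_l.
by have [i hi] := hP e he; apply: (hs i); rewrite ?mem_enum.
Qed.

Lemma Ghull_G0 (N : nat) (r : 'I_N -> R) xi l (y g : 'I_N -> R) :
  in_unit_cube y -> Ghull r xi l y g -> G0 r xi l y g.
Proof.
move=> cy hull.
pose P i e := exists y' g', (y' i = 1 /\ g' i = 0 /\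
    forall j, j != i -> Defs.Rset r (xi l) i j y' (g' j)) /\
  (forall a, Rabs (y' a - y a) < e) /\ (forall a, Rabs (g' a - g a) < e).
have [i Hi] : exists i, forall e, 0 < e -> P i e.
  apply: exists_uniform_index => [i e e' le [y' [g' [h1 [h2 h3]]]] | e he].
    by exists y', g'; split=> //; split=> a; [have := h2 a | have := h3 a]; lra.
  have [y' [g' [[_ [i [h1 [h2 h3]]]] [h4 h5]]]] := hull e he.
  by exists i, y', g'.
split=> //; exists i; split; [|split].
- apply: Rabs_sub_lt_all_eq => e he; have [y' [g' [[yi _] [h _]]]] := Hi e he.
  by move: (h i); rewrite yi Rabs_minus_sym.
- apply: Rabs_sub_lt_all_eq => e he; have [y' [g' [[_ [gi _]] [_ h]]]] := Hi e he.
  by move: (h i); rewrite gi Rabs_minus_sym.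
- move=> j hj; apply: Rset_closed => e he.
  have [y' [g' [[_ [_ hR]] [hy hg]]]] := Hi e he.
  by exists y', (g' j); split; [apply: hR | split; [apply: hy | apply: hg]].
Qed.

Lemma G0_cube (N : nat) (r : 'I_N -> R) xi l (y g : 'I_N -> R) :
  G0 r xi l y g -> in_unit_cube g.
Proof.
move=> [cy [i [_ [gi hR]]]] j.
case: (j =P i) => [-> | /eqP hj]; first by rewrite gi; lra.
exact: Rset_cube (hR j hj) (cy j).
Qed.

Section AffineFlow.
Variables lo hi : R.

Definition continuous_in (f : R -> R) (p : R) : Prop :=
  forall e, 0 < e -> exists2 d, 0 < d &
    forall u, lo <= u <= hi -> Rabs (u - p) < d -> Rabs (f u - f p) < e.

Lemma continuous_in_sub_linear f c p :
  continuous_in f p -> continuous_in (fun u => f u - c * u) p.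
Proof.
move=> hf e he; have hk : 0 < Rabs c + 1 by have := Rabs_pos c; lra.
have [d hd hfd] := hf (e / 2) ltac:(lra).
have he' : 0 < e / (2 * (Rabs c + 1)) by apply: Rdiv_lt_0_compat; lra.
exists (Rmin d (e / (2 * (Rabs c + 1)))); first exact: Rmin_pos.
move=> u hu /Rabs_def2 hup.
have := Rmin_l d (e / (2 * (Rabs c + 1))); have := Rmin_r d (e / (2 * (Rabs c + 1))).
move=> m2 m1; have hfu := hfd u hu (Rabs_def1 (u - p) d ltac:(lra) ltac:(lra)).
have hcu : Rabs (c * (u - p)) <= e / 2.
  rewrite Rabs_mult; apply: Rle_trans (_ : (Rabs c + 1) * (e / (2 * (Rabs c + 1))) <= _).
    apply: Rmult_le_compat; try apply: Rabs_pos; first lra.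
    by apply: Rlt_le; apply: Rabs_def1; lra.
  by apply: Req_le; field; lra.
have := Rabs_triang (f u - f p) (- (c * (u - p))); rewrite Rabs_Ropp.
have -> : f u - f p + - (c * (u - p)) = f u - c * u - (f p - c * p) by ring.
lra.
Qed.

Lemma interior_point_near p d : lo < hi -> lo <= p <= hi -> 0 < d ->
  exists u, lo < u < hi /\ Rabs (u - p) < d.
Proof.
move=> lh hp hd; set del := Rmin (d / 2) ((hi - lo) / 4).
have hdel : 0 < del by apply: Rmin_pos; lra.
have m1 : del <= d / 2 := Rmin_l _ _.
have m2 : del <= (hi - lo) / 4 := Rmin_r _ _.
case: (Rle_dec p ((lo + hi) / 2)) => hmid.
  by exists (p + del); split; [lra | apply: Rabs_def1; lra].
by exists (p - del); split; [lra | apply: Rabs_def1; lra].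
Qed.

Lemma derivable_0_const h : (forall u, lo < u < hi -> derivable_pt_lim h u 0) ->
  forall u v, lo < u < hi -> lo < v < hi -> h u = h v.
Proof.
move=> hd.
have key u v : lo < u < hi -> lo < v < hi -> u < v -> h u = h v.
  move=> hu hv lt; case: (MVT_cor2 h (fun _ => 0) u v lt) => [c hc | c [hc _]].
    by apply: hd; lra.
  lra.
move=> u v hu hv; case: (Rtotal_order u v) => [lt | [-> | gt]] //.
  exact: key.
by symmetry; apply: key.
Qed.

Lemma continuous_in_const_closure h x0 p : lo < hi -> lo <= p <= hi ->
  (forall u, lo < u < hi -> h u = x0) -> continuous_in h p -> h p = x0.
Proof.
move=> lh hp hconst hc; apply: Rabs_sub_lt_all_eq => e he.
have [d hd hdc] := hc e he.
have [u [hu hup]] := interior_point_near lh hp hd.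
by have := hdc u ltac:(lra) hup; rewrite hconst // Rabs_minus_sym.
Qed.

Lemma affine_of_derivable_const g c : lo <= hi ->
  (forall u, lo < u < hi -> derivable_pt_lim g u c) ->
  (forall p, lo <= p <= hi -> continuous_in g p) ->
  forall s, lo <= s <= hi -> g s = g lo + c * (s - lo).
Proof.
move=> lh hd hc s hs; case: (Req_dec lo hi) => [eq | ne].
  by rewrite (_ : s = lo); [ring | lra].
have lt : lo < hi by lra.
pose h u := g u - c * u.
have hd0 u : lo < u < hi -> derivable_pt_lim h u 0.
  move=> hu; have -> : 0 = c - c * 1 by ring.
  apply: (derivable_pt_lim_minus g (mult_real_fct c id)); first exact: hd.
  exact: derivable_pt_lim_scal (derivable_pt_lim_id u).
have mid : lo < (lo + hi) / 2 < hi by lra.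
have hconst u : lo < u < hi -> h u = h ((lo + hi) / 2).
  by move=> hu; exact: (derivable_0_const hd0 hu mid).
have := continuous_in_const_closure lt (conj (Rle_refl lo) lh) hconst
  (continuous_in_sub_linear c (hc lo (conj (Rle_refl lo) lh))).
have := continuous_in_const_closure lt hs hconst (continuous_in_sub_linear c (hc s hs)).
by rewrite /h; lra.
Qed.

End AffineFlow.

Lemma affine_le1_at_end x T lo s : 0 < T -> lo < s -> x <= 1 ->
  (forall u, lo < u < s -> x + (u - lo) / T <= 1) -> x + (s - lo) / T <= 1.
Proof.
move=> hT hs hx hle; apply: Rnot_lt_le => hgt.
set d := x + (s - lo) / T - 1.
have hd : 0 < d by rewrite /d; lra.
have hdT : d * T = (x - 1) * T + (s - lo) by rewrite /d; field; lra.
have : (x - 1) * T <= 0 by nra.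
have : 0 < d * T by nra.
move=> h1 h2; have := hle (s - d * T / 2) ltac:(lra).
rewrite (_ : (s - d * T / 2 - lo) / T = (s - lo) / T - d / 2).
  by rewrite /d; lra.
by field; lra.
Qed.

Definition jump_times_upto (dom : R -> nat -> Prop) (T0 : R) (J0 : nat) (t : nat -> R) : Prop :=
  [/\ t O = 0, (forall j, (j <= J0)%N -> t j <= t j.+1),
      (forall j s, (j <= J0)%N -> t j <= s <= t j.+1 -> dom s j /\ s <= T0) &
      (forall j s, dom s j -> s <= T0 -> (j <= J0)%N -> t j <= s <= t j.+1)].

Section JumpTimes.
Variables (dom : R -> nat -> Prop) (T0 : R) (J0 : nat) (t : nat -> R).
Hypothesis jt : jump_times_upto dom T0 J0 t.

Lemma jump_times_step j : (j <= J0)%N -> t j <= t j.+1.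
Proof. by case: jt => _ h _ _; apply: h. Qed.

Lemma jump_times_mono i j : (i <= j)%N -> (j <= J0.+1)%N -> t i <= t j.
Proof.
elim: j => [|j IH] hij hj; first by rewrite (_ : i = 0%N); [lra | lia].
case: (i =P j.+1) => [-> | ne]; first lra.
by have := IH ltac:(lia) ltac:(lia); have := jump_times_step (j := j) ltac:(lia); lra.
Qed.

Lemma jump_times_ge0 j : (j <= J0.+1)%N -> 0 <= t j.
Proof. by case: jt => t0 _ _ _ hj; rewrite -t0; apply: jump_times_mono. Qed.

Lemma jump_times_dom j s : (j <= J0)%N -> t j <= s <= t j.+1 -> dom s j.
Proof. by case: jt => _ _ h _ hj hs; case: (h j s hj hs). Qed.

Lemma jump_times_le j s : (j <= J0)%N -> t j <= s <= t j.+1 -> s <= T0.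
Proof. by case: jt => _ _ h _ hj hs; case: (h j s hj hs). Qed.

Lemma jump_times_interior j s : (j <= J0)%N -> t j < s < t j.+1 -> interior_pt dom j s.
Proof.
move=> hj hs; exists (Rmin (s - t j) (t j.+1 - s)); split; first by apply: Rmin_pos; lra.
move=> u /Rabs_def2 hu; apply: jump_times_dom => //.
by have := Rmin_l (s - t j) (t j.+1 - s); have := Rmin_r (s - t j) (t j.+1 - s); lra.
Qed.

Lemma jump_times_jump_dom j : (j < J0)%N -> dom (t j.+1) j /\ dom (t j.+1) j.+1.
Proof.
move=> hj; have s0 := jump_times_step (ltnW hj); have s1 := jump_times_step hj.
by split; [apply: (jump_times_dom (ltnW hj)) | apply: (jump_times_dom hj)]; lra.
Qed.

End JumpTimes.

Section Solution.
Variables (N : nat) (T : R) (r : 'I_N -> R) (xi : nat -> 'I_N -> 'I_N -> Prop)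
  (dom : R -> nat -> Prop) (tau : R -> nat -> 'I_N -> R) (lam : R -> nat -> nat).
Hypothesis Tpos : 0 < T.
Hypothesis sol : is_solution T r xi dom tau lam.

Lemma jump_times_exist T0 J0 : dom T0 J0 -> exists t, jump_times_upto dom T0 J0 t.
Proof.
case: sol => htd _ hd; have [J [t [t0 [tmono tiff]]]] := htd T0 J0 hd.
have hJ : (J0 < J)%N by case: (proj1 (tiff T0 J0) (conj hd (conj (Rle_refl _) (leqnn _)))).
exists t; split=> // [j hj | j s hj hs | j s hds hs hj].
- by apply: tmono; lia.
- by have [? []] := proj2 (tiff s j) (conj (leq_ltn_trans hj hJ) hs).
- by case: (proj1 (tiff s j) (conj hds (conj hs hj))).
Qed.

Lemma dom_lower s k k' : dom s k -> (k' <= k)%N -> exists s', 0 <= s' <= s /\ dom s' k'.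
Proof.
move=> hd hk; have [t jt] := jump_times_exist hd.
have hs : t k <= s <= t k.+1 by case: jt => _ _ _ h; apply: h => //; lra.
exists (t k'); split.
  by split; [apply: (jump_times_ge0 jt); lia | have := jump_times_mono jt hk ltac:(lia); lra].
by apply: (jump_times_dom jt) => //; have := jump_times_step jt hk; lra.
Qed.

Hypothesis lam0 : lam 0 O = O.

Section AlongJumpTimes.
Variables (T0 : R) (J0 : nat) (t : nat -> R).
Hypothesis jt : jump_times_upto dom T0 J0 t.

Lemma jump_times_lam j s : (j <= J0)%N -> t j <= s <= t j.+1 -> lam s j = j.
Proof.
case: sol => [_ [hd00 [_ [_ [_ [hlam hjump]]]]]].
elim: j s => [|j IH] s hj hs; first by rewrite (hlam 0%N s 0) //; exact: (jump_times_dom jt hj hs).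
have [d1 d2] := jump_times_jump_dom jt hj; have st := jump_times_step jt (j := j) ltac:(lia).
rewrite (hlam j.+1 s (t j.+1) (jump_times_dom jt hj hs) d2).
by case: (hjump _ _ d1 d2) => _ [_ ->]; rewrite (IH (t j.+1)) //; [lia | lra].
Qed.

Lemma jump_times_jump j : (j < J0)%N ->
  inD (tau (t j.+1) j) /\ G0 r xi j.+1 (tau (t j.+1) j) (tau (t j.+1) j.+1).
Proof.
case: sol => [_ [_ [_ [_ [_ [_ hjump]]]]]] hj.
have [d1 d2] := jump_times_jump_dom jt hj; have st := jump_times_step jt (j := j) ltac:(lia).
have [hD [hG _]] := hjump _ _ d1 d2.
rewrite (jump_times_lam (j := j)) in hG; [| lia | lra].
by split=> //; apply: Ghull_G0 (proj1 hD) hG.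
Qed.

Lemma jump_times_flow j s a : (j <= J0)%N -> t j <= s <= t j.+1 ->
  tau s j a = tau (t j) j a + (s - t j) / T.
Proof.
case: sol => [_ [_ [_ [hcont [hflow _]]]]] hj hs.
have := affine_of_derivable_const (g := fun u => tau u j a) (c := / T) (jump_times_step jt hj).
move=> /(_ _ _ s hs) ->; first by rewrite /Rdiv; ring.
  by move=> u hu; case: (hflow j u (jump_times_interior jt hj hu)).
move=> p hp e he; have [d [hd hdc]] := hcont j p (jump_times_dom jt hj hp) a e he.
by exists d => // u hu; apply: hdc => //; apply: (jump_times_dom jt hj hu).
Qed.

Lemma jump_times_cube j s : (j <= J0)%N -> t j <= s <= t j.+1 -> in_unit_cube (tau s j).
Proof.
have start k : (k <= J0)%N -> in_unit_cube (tau (t k) k).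
  case: sol => [_ [_ [hC _]]]; case: k => [_ | k hk]; first by case: jt => ->.
  by case: (jump_times_jump (j := k) hk) => _; apply: G0_cube.
case: sol => [_ [_ [_ [_ [hflow _]]]]] hj [hs1 hs2] a.
have [x0 x1] := start j hj a; rewrite (jump_times_flow a hj (conj hs1 hs2)).
have h0 : 0 <= (s - t j) / T by apply: Rmult_le_pos; [lra | apply: Rlt_le; apply: Rinv_0_lt_compat].
split; first lra.
case: hs1 => [lt | <-]; last lra.
apply: affine_le1_at_end => // u hu.
rewrite -(jump_times_flow (s := u) a hj); last lra.
have hin : interior_pt dom j u by apply: (jump_times_interior jt hj); lra.
by case: (hflow j u hin) => /(_ a) [].
Qed.

End AlongJumpTimes.

Lemma dom_cube s j : dom s j -> in_unit_cube (tau s j).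
Proof.
move=> hd; have [t jt] := jump_times_exist hd.
by apply: (jump_times_cube jt (leqnn j)); case: jt => _ _ _ h; apply: h => //; lra.
Qed.

End Solution.

Definition no_edge_entering_Uq (N : nat) (E : rel 'I_N) (istar : 'I_N) (m : nat)
    (El : 'I_N -> 'I_N -> Prop) : Prop :=
  forall a b, El a b -> in_Uq E istar m b -> in_Uq E istar m a.

Lemma Aq_mono (N : nat) (E : rel 'I_N) istar m (x : 'I_N -> R) :
  in_Aq E istar m.+1 x -> in_Aq E istar m x.
Proof.
have sub a : in_Uq E istar m a -> in_Uq E istar m.+1 a by apply: Uq_mono.
by move=> [c [heq | h01]]; split=> //; [left => a b /sub ha /sub hb | right => a /sub ha]; auto.
Qed.

Lemma Aq_flow (N : nat) (E : rel 'I_N) istar m (x y : 'I_N -> R) d :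
  (forall a, y a = x a + d) -> 0 <= d -> in_unit_cube y ->
  in_Aq E istar m x -> in_Aq E istar m y.
Proof.
move=> hy hd cy [_ [heq | h01]]; split=> //.
  by left=> a b ha hb; rewrite !hy (heq a b ha hb).
case: (Req_dec d 0) => [d0 | dn].
  by right=> a ha; rewrite hy d0 Rplus_0_r; apply: h01.
have x0 c : in_Uq E istar m c -> x c = 0.
  by move=> hc; case: (h01 c hc) => // x1; have := cy c; rewrite hy x1; lra.
by left=> a b ha hb; rewrite !hy (x0 a ha) (x0 b hb).
Qed.

Section Invariance.
Variables (N : nat) (E : rel 'I_N) (istar : 'I_N) (T : R) (r : 'I_N -> R)
  (xi : nat -> 'I_N -> 'I_N -> Prop) (dom : R -> nat -> Prop)
  (tau : R -> nat -> 'I_N -> R) (lam : R -> nat -> nat) (m : nat).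
Hypothesis Tpos : 0 < T.
Hypothesis r01 : forall i, 0 < r i < 1.
Hypothesis sol : is_solution T r xi dom tau lam.
Hypothesis lam0 : lam 0 O = O.

Lemma Aq_jump l (y g : 'I_N -> R) :
  in_unit_cube y -> G0 r xi l y g -> no_edge_entering_Uq E istar m (xi l) ->
  in_Aq E istar m y -> in_Aq E istar m g.
Proof.
move=> cy hG hin [_ hA]; split; first exact: G0_cube hG.
case: hG => _ [i [yi [gi hR]]].
have g01 : (forall a, in_Uq E istar m a -> y a = 0 \/ y a = 1) ->
           forall a, in_Uq E istar m a -> g a = 0 \/ g a = 1.
  move=> h a ha; case: (a =P i) => [-> | /eqP ne]; first by left.
  exact: (Rset_01 r01 (hR a ne : Defs.Rset r (xi l) i a y (g a)) (h a ha)).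
case: hA => [heq | h01]; last by right; apply: g01.
case: (classic (in_Uq E istar m i)) => hi.
  by right; apply: g01 => a ha; right; rewrite (heq a i ha hi).
have gy c : in_Uq E istar m c -> g c = y c.
  move=> hc; have ne : c != i by apply/eqP => e; apply: hi; rewrite -e.
  by apply: (Rset_nonedge (hR c ne)) => he; apply: hi; apply: hin he hc.
by left=> a b ha hb; rewrite (gy a ha) (gy b hb); apply: heq.
Qed.

Section Propagation.
Variables (T0 : R) (J0 : nat) (t : nat -> R).
Hypothesis jt : jump_times_upto dom T0 J0 t.

Lemma Aq_along_flow j s s' : (j <= J0)%N -> t j <= s -> s <= s' <= t j.+1 ->
  in_Aq E istar m (tau s j) -> in_Aq E istar m (tau s' j).
Proof.
move=> hj hs hss'; apply: (Aq_flow (d := (s' - s) / T)).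
- move=> a; rewrite (jump_times_flow sol jt (s := s') a hj) ?(jump_times_flow sol jt (s := s) a hj);
    [field | lra | lra]; lra.
- by apply: Rmult_le_pos; [lra | apply: Rlt_le; apply: Rinv_0_lt_compat].
- by apply: (jump_times_cube Tpos sol lam0 jt hj); lra.
Qed.

Lemma Aq_to_next_start j s : (j < J0)%N -> t j <= s <= t j.+1 ->
  no_edge_entering_Uq E istar m (xi j.+1) ->
  in_Aq E istar m (tau s j) -> in_Aq E istar m (tau (t j.+1) j.+1).
Proof.
move=> hj hs hin hA; have [[cy _] hG] := jump_times_jump sol lam0 jt hj.
apply: Aq_jump cy hG hin _; apply: Aq_along_flow hA; [lia | lra | lra].
Qed.

End Propagation.

Lemma Aq_forward t k t' k' :
  dom t k -> dom t' k' -> t <= t' -> (k <= k')%N ->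
  (forall l, (k < l <= k')%N -> no_edge_entering_Uq E istar m (xi l)) ->
  in_Aq E istar m (tau t k) -> in_Aq E istar m (tau t' k').
Proof.
move=> hd hd' htt hkk hin hA; have [ts jt] := jump_times_exist sol hd'.
have inside s j : dom s j -> s <= t' -> (j <= k')%N -> ts j <= s <= ts j.+1.
  by case: jt => _ _ _ h; apply: h.
have hp := inside t k hd htt hkk; have hp' := inside t' k' hd' (Rle_refl _) (leqnn _).
have start j : (k < j <= k')%N -> in_Aq E istar m (tau (ts j) j).
  elim: j => [|j IH] // hj.
  have [s hs hAs] : exists2 s, ts j <= s <= ts j.+1 & in_Aq E istar m (tau s j).
    case: (ltngtP k j) hj => [kj hj | | <- _]; [| lia | by exists t].
    have := jump_times_step jt (j := j) ltac:(lia).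
    by exists (ts j); [lra | apply: IH; lia].
  by apply: (Aq_to_next_start jt _ hs _ hAs); [lia | apply: hin; lia].
case: (ltngtP k k') hkk => // [lt | ek] _; last by subst k'; apply: (Aq_along_flow jt (leqnn k)) hA; lra.
by apply: (Aq_along_flow jt (leqnn k') _ _ (start k' _)); [lra | lra | lia].
Qed.

End Invariance.

Lemma size_uniq_notin_lt (N : nat) (s : seq 'I_N) (v : 'I_N) :
  uniq s -> v \notin s -> (size s < N)%N.
Proof.
move=> us vs; have : uniq (v :: s) by rewrite /= vs.
by move/card_uniqP => /= <-; have := max_card (mem (v :: s)); rewrite card_ord.
Qed.

Lemma exists_switch (P : nat -> Prop) M : P 0%N -> ~ P M ->
  exists n, [/\ (n < M)%N, P n & ~ P n.+1].
Proof.
move=> h0; elim: M => [|M IH] hM //.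
case: (classic (P M)) => hPM; first by exists M.
by have [n [hn hPn hPn1]] := IH hPM; exists n; split=> //; lia.
Qed.

Section DiscreteRun.
(* X j and Y j are the timers at the beginning and at the end of the j-th flow interval, and
   fi j is the agent firing at the jump that follows it. *)
Variables (N : nat) (E : rel 'I_N) (istar : 'I_N) (r : 'I_N -> R) (q : nat)
  (X Y : nat -> 'I_N -> R) (fi : nat -> 'I_N) (a K : nat).
Hypothesis r01 : forall i, 0 < r i < 1.
Hypothesis long_window : (a + 2 * N <= K + 1)%N.
Hypothesis flow : forall j, (a <= j <= K)%N ->
  exists2 d, 0 <= d & forall b, Y j b = X j b + d.
Hypothesis cube : forall j, (a <= j <= K)%N -> in_unit_cube (X j) /\ in_unit_cube (Y j).
Hypothesis fires : forall j, (a <= j < K)%N ->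
  [/\ Y j (fi j) = 1, X j.+1 (fi j) = 0 &
      forall b : 'I_N, b != fi j -> Defs.Rset r (Gq E istar q) (fi j) b (Y j) (X j.+1 b)].
Hypothesis level_q : forall j, (a <= j <= K)%N -> in_Aq E istar q (X j).

Lemma N_gt0 : (0 < N)%N.
Proof. exact: leq_ltn_trans (leq0n istar) (ltn_ord istar). Qed.

Definition fired_in lo n : seq 'I_N := [seq fi j | j <- iota lo n].

Lemma fired_inS lo n : fired_in lo n.+1 = rcons (fired_in lo n) (fi (lo + n)).
Proof. by rewrite /fired_in -addn1 iotaD map_cat cats1. Qed.

Definition next_level_reached : Prop :=
  exists2 j, (a <= j <= K)%N & in_Aq E istar q.+1 (X j) \/ in_Aq E istar q.+1 (Y j).

Lemma level_q_end j : (a <= j <= K)%N -> in_Aq E istar q (Y j).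
Proof.
by move=> hj; have [d hd hY] := flow hj; apply: Aq_flow hY hd (proj2 (cube hj)) (level_q hj).
Qed.

Lemma firing_in_Uq_01 j u : (a <= j < K)%N -> in_Uq E istar q (fi j) ->
  in_Uq E istar q u -> Y j u = 0 \/ Y j u = 1.
Proof.
move=> hj hf hu; have [_ [heq | h01]] := level_q_end (j := j) ltac:(lia); last exact: h01.
by right; rewrite (heq u (fi j) hu hf); case: (fires hj).
Qed.

Section BelowMinimum.
Variable u0 : 'I_N.
Hypothesis u0_Uq : in_Uq E istar q u0.

Section OneJump.
Variable j : nat.
Hypothesis hj : (a <= j < K)%N.
Hypothesis u0_below1 : Y j u0 < 1.

Lemma firing_ne_u0 : fi j != u0.
Proof. by apply/eqP => e; case: (fires hj) => hf _ _; rewrite e in hf; lra. Qed.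

Lemma edge_from_firing_u0_zero b : Gq E istar q (fi j) b -> Y j u0 = 0.
Proof.
move=> [_ hv]; case: (firing_in_Uq_01 hj (Vq_Uq hv) u0_Uq) => // h1.
by have := u0_below1; rewrite h1; lra.
Qed.

Lemma jump_u0 : X j.+1 u0 = Y j u0.
Proof.
have hne : u0 != fi j by rewrite eq_sym; apply: firing_ne_u0.
have [_ _ /(_ u0 hne) hR] := fires hj.
case: (classic (Gq E istar q (fi j) u0)) => he; last exact: Rset_nonedge hR he.
by have y0 := edge_from_firing_u0_zero he; rewrite y0 (Rset_at0 r01 hR y0).
Qed.

Lemma jump_keeps_below b : b != fi j -> Y j b <= Y j u0 -> X j.+1 b <= X j.+1 u0.
Proof.
move=> hb hle; have [_ _ /(_ b hb) hR] := fires hj; rewrite jump_u0.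
case: (classic (Gq E istar q (fi j) b)) => he; last by rewrite (Rset_nonedge hR he).
have y0 := edge_from_firing_u0_zero he.
have yb : Y j b = 0 by have := (proj2 (cube (j := j) ltac:(lia))) b; lra.
by rewrite (Rset_at0 r01 hR yb) y0; lra.
Qed.

Lemma jump_keeps_min u : in_Uq E istar q u -> Y j u0 <= Y j u -> X j.+1 u0 <= X j.+1 u.
Proof.
move=> hu hle; rewrite jump_u0.
have [cX1 _] := cube (j := j.+1) ltac:(lia).
case: (u =P fi j) hu => [-> hu | /eqP nu _].
  have [_ -> _] := fires hj.
  by case: (firing_in_Uq_01 hj hu u0_Uq) => h; lra.
have [_ _ /(_ u nu) hR] := fires hj.
case: (classic (Gq E istar q (fi j) u)) => he; last by rewrite (Rset_nonedge hR he).
by rewrite (edge_from_firing_u0_zero he); case: (cX1 u).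
Qed.

End OneJump.

Hypothesis u0_min : forall u, in_Uq E istar q u -> X a u0 <= X a u.

Definition below_u0 n : Prop :=
  let F := fired_in a n in
  [/\ u0 \notin F, uniq F, {in F, forall b, X (a + n)%N b <= X (a + n)%N u0} &
      forall u, in_Uq E istar q u -> X (a + n)%N u0 <= X (a + n)%N u].

Lemma below_u0_step n : (a + n < K)%N -> below_u0 n -> Y (a + n)%N u0 < 1 ->
  below_u0 n.+1.
Proof.
rewrite /below_u0 fired_inS addnS; set j := (a + n)%N => hn [nF uF belowF minF] hlt.
have hj : (a <= j < K)%N by rewrite /j; lia.
have [d hd hY] := flow (j := j) ltac:(lia).
have fresh : fi j \notin fired_in a n.
  apply/negP => /belowF; have := hY (fi j); have [-> _ _] := fires hj; have := hY u0; lra.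
split.
- by rewrite mem_rcons inE negb_or eq_sym firing_ne_u0.
- by rewrite rcons_uniq fresh.
- move=> b; rewrite mem_rcons inE => /orP [/eqP -> | hb].
    by have [_ -> _] := fires hj; case: (proj1 (cube (j := j.+1) ltac:(lia)) u0).
  have hbj : b != fi j by apply: contraNneq fresh => <-.
  by apply: jump_keeps_below => //; have := belowF b hb; rewrite !hY; lra.
- by move=> u hu; apply: jump_keeps_min => //; have := minF u hu; rewrite !hY; lra.
Qed.

Lemma below_u0_upto n : (a + n <= K)%N ->
  (forall j, (a <= j < a + n)%N -> Y j u0 < 1) -> below_u0 n.
Proof.
elim: n => [|n IH] hn hy.
  by rewrite /below_u0 addn0; split=> // u hu; apply: u0_min.
apply: below_u0_step; [lia | apply: IH => [|j hj]; [lia | apply: hy; lia] | apply: hy; lia].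
Qed.

Lemma Uq_reach_one : exists js, [/\ (a <= js)%N, (js + N <= K)%N &
  forall u, in_Uq E istar q u -> Y js u = 1].
Proof.
have N0 := N_gt0.
pose P n := forall j, (a <= j < a + n)%N -> Y j u0 < 1.
have notPN : ~ P N.
  move=> hP; have [nF uF _ _] := below_u0_upto (n := N) ltac:(lia) hP.
  by have := size_uniq_notin_lt uF nF; rewrite size_map size_iota ltnn.
have [n [hn hPn hPn1]] := exists_switch (P := P) (fun j hj => ltac:(lia)) notPN.
have [_ cY] := cube (j := (a + n)%N) ltac:(lia).
have hu0 : Y (a + n)%N u0 = 1.
  apply: Rle_antisym; first by case: (cY u0).
  apply: Rnot_lt_le => hlt; apply: hPn1 => j hj.
  by case: (j =P (a + n)%N) => [-> | ne] //; apply: hPn; lia.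
have [_ _ _ minF] := below_u0_upto (n := n) ltac:(lia) hPn.
exists (a + n)%N; split=> [||u hu]; try lia.
have [d hd hY] := flow (j := (a + n)%N) ltac:(lia).
apply: Rle_antisym; first by case: (cY u).
by have := minF u hu; move: hu0; rewrite !hY; lra.
Qed.

End BelowMinimum.

Definition sync_inv (Z : 'I_N -> R) (F : seq 'I_N) : Prop :=
  [/\ {in F, forall b, Z b = 0},
      forall v, in_Vq E istar q v -> v \notin F -> Z v = 1,
      forall u, in_Uq E istar q u -> Z u = 0 \/ Z u = 1 &
      forall v b, in_Vq E istar q v -> E v b -> v \in F -> Z b = 0 \/ Z b = 1].

Lemma sync_inv_jump j F : (a <= j < K)%N ->
  sync_inv (Y j) F -> sync_inv (X j.+1) (rcons F (fi j)).
Proof.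
move=> hj [zeroF oneV U01 fired01]; have [_ f0 hR] := fires hj.
split.
- move=> b; rewrite mem_rcons inE => /orP [/eqP -> // | hb].
  case: (b =P fi j) => [-> // | /eqP nb].
  exact: (Rset_at0 r01 (hR b nb)) (zeroF b hb).
- move=> v hv; rewrite mem_rcons inE negb_or => /andP [nv hvF].
  exact: (Rset_at1 r01 (hR v nv)) (oneV v hv hvF).
- move=> u hu; case: (u =P fi j) => [-> | /eqP nu]; first by left.
  exact: (Rset_01 r01 (hR u nu)) (U01 u hu).
- move=> v b hv hvb; case: (b =P fi j) => [-> _ | /eqP nb]; first by left.
  rewrite mem_rcons inE => /orP [/eqP ev | hvF].
    by apply: Rset_edge01 (hR b nb) _; rewrite -ev.
  exact: (Rset_01 r01 (hR b nb)) (fired01 v b hv hvb hvF).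
Qed.

Lemma sync_inv_flow j F v : (a <= j <= K)%N ->
  sync_inv (X j) F -> in_Vq E istar q v -> v \notin F -> sync_inv (Y j) F.
Proof.
move=> hj hX hv hvF; have [d hd hY] := flow hj.
have d0 : d = 0.
  have [_ oneV _ _] := hX; have := proj2 (cube hj) v; rewrite hY (oneV v hv hvF); lra.
suff -> : Y j = X j by [].
by apply: functional_extensionality => b; rewrite hY d0 Rplus_0_r.
Qed.

Lemma sync_inv_next_level Z F : in_unit_cube Z -> sync_inv Z F ->
  (forall v, in_Vq E istar q v -> v \in F) -> in_Aq E istar q.+1 Z.
Proof.
move=> cZ [_ _ U01 fired01] allV; split=> //; right=> b hb.
case: (UqS_split hb) => [hbU | hbV]; first exact: U01.
by have [v hv hvb] := VqS_pred hbV; apply: fired01 hv hvb (allV v hv).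
Qed.

Section Synchronized.
Variable js : nat.
Hypotheses (js_lo : (a <= js)%N) (js_hi : (js + N <= K)%N).
Hypothesis Uq_one : forall u, in_Uq E istar q u -> Y js u = 1.

Lemma sync_loop n : (n <= N)%N -> next_level_reached \/
  [/\ uniq (fired_in js n), sync_inv (Y (js + n)%N) (fired_in js n) &
      exists2 v, in_Vq E istar q v & v \notin fired_in js n].
Proof.
elim: n => [_ | n IH hn].
  rewrite addn0; have hY : sync_inv (Y js) [::].
    by split=> // [v hv _ | u hu]; [apply: Uq_one; apply: Vq_Uq | right; apply: Uq_one].
  case: (classic (exists v, in_Vq E istar q v)) => [[v hv] | noV]; first by right; split=> //; exists v.
  left; exists js; first lia.
  right; apply: (sync_inv_next_level _ hY) => [|v hv]; first by case: (cube (j := js) ltac:(lia)).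
  by case: noV; exists v.
case: (IH ltac:(lia)) => [// | [uF hsync [v hv hvF]]]; first by left.
set j := (js + n)%N in hsync; have hj : (a <= j < K)%N by rewrite /j; lia.
have fresh : fi j \notin fired_in js n.
  by have [zeroF _ _ _] := hsync; apply/negP => /zeroF; have [-> _ _] := fires hj; lra.
have hX := sync_inv_jump hj hsync; rewrite -fired_inS in hX.
case: (classic (exists2 v, in_Vq E istar q v & v \notin fired_in js n.+1)) => [[v' hv' hv'F] | hall].
  right; rewrite addnS; split=> //; last by exists v'.
    by rewrite fired_inS rcons_uniq fresh.
  by apply: sync_inv_flow hX hv' hv'F; lia.
left; exists j.+1; first lia.
left; apply: (sync_inv_next_level _ hX) => [|w hw]; first by case: (cube (j := j.+1) ltac:(lia)).
by apply/negPn/negP => hn'; apply: hall; exists w.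
Qed.

Lemma sync_reaches_next_level : next_level_reached.
Proof.
case: (sync_loop (leqnn N)) => // [[uF _ [v _ hv]]].
by have := size_uniq_notin_lt uF hv; rewrite size_map size_iota ltnn.
Qed.

End Synchronized.

Lemma Uq_min_exists : exists2 u0, in_Uq E istar q u0 &
  forall u, in_Uq E istar q u -> X a u0 <= X a u.
Proof.
have ha : (a <= a <= K)%N by have := N_gt0; lia.
have [[cX _] root_q] := (cube ha, root_Uq E istar q).
case: (level_q ha) => _ [heq | h01].
  by exists istar => // u hu; rewrite (heq istar u root_q hu); lra.
case: (classic (exists2 u0, in_Uq E istar q u0 & X a u0 = 0)) => [[u0 hu0 h0] | no0].
  by exists u0 => // u _; rewrite h0; case: (cX u).
have one u : in_Uq E istar q u -> X a u = 1.
  by move=> hu; case: (h01 u hu) => // h0; case: no0; exists u.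
by exists istar => // u hu; rewrite !one //; lra.
Qed.

Lemma discrete_run_next_level : next_level_reached.
Proof.
have [u0 hu0 u0_min] := Uq_min_exists.
have [js [js_lo js_hi Uq_one]] := Uq_reach_one hu0 u0_min.
exact: sync_reaches_next_level js_lo js_hi Uq_one.
Qed.

End DiscreteRun.

Lemma Aq0 (N : nat) (E : rel 'I_N) istar (x : 'I_N -> R) :
  in_unit_cube x -> in_Aq E istar 0 x.
Proof. by split=> //; left=> a b /Uq0_root -> /Uq0_root ->. Qed.

Section Stages.
Variables (N : nat) (E : rel 'I_N) (T : R) (r : 'I_N -> R)
    (istar : 'I_N) (xi : nat -> 'I_N -> 'I_N -> Prop) (k0 qs : nat)
    (dom : R -> nat -> Prop) (tau : R -> nat -> 'I_N -> R)
    (lam : R -> nat -> nat) (tq : nat -> R).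
Hypothesis Tpos : 0 < T.
Hypothesis r01 : forall i, 0 < r i < 1.
Hypothesis sync : sync_at E istar qs (lstar r) xi k0.
Hypothesis sol : is_solution T r xi dom tau lam.
Hypothesis lam0 : lam 0 O = O.
Hypothesis tq_min : forall q, (q <= qs)%N -> is_min_time dom (k0 + q * lstar r)%N (tq q).

Local Notation ls := (lstar r).
Local Notation kq q := (k0 + q * lstar r)%N.

Lemma kq_succ q : kq q.+1 = (kq q + ls)%N.
Proof. by rewrite mulSn; lia. Qed.

Lemma stage_edges q l : (q < qs)%N -> (kq q <= l < kq q + ls)%N ->
  forall a b, xi l a b <-> Gq E istar q a b.
Proof.
by move=> hq hl a b; rewrite (_ : l = kq q + (l - kq q))%N; [apply: sync; lia | lia].
Qed.

Lemma no_edge_entering_stage m q l : (q < qs)%N -> (q <= m)%N ->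
  (kq q <= l < kq q + ls)%N -> no_edge_entering_Uq E istar m (xi l).
Proof.
move=> hq hm hl a b /(stage_edges hq hl a b) [_ hv] _.
exact: Uq_mono hm (Vq_Uq hv).
Qed.

Lemma no_edge_entering_two_stages q m l : (q.+1 < qs)%N -> (q.+1 <= m)%N ->
  (kq q < l < kq q.+2)%N -> no_edge_entering_Uq E istar m (xi l).
Proof.
move=> hq hm hl; have e1 := kq_succ q; have e2 := kq_succ q.+1.
case: (ltnP l (kq q.+1)) => hl'.
  by apply: (no_edge_entering_stage (q := q)); lia.
by apply: (no_edge_entering_stage (q := q.+1)); lia.
Qed.

Definition witness q t' k' : Prop :=
  dom t' k' /\ (tq q <= t' /\ (kq q <= k')%N) /\
  (t' <= tq q.+1 /\ (k' <= kq q.+1 - 1)%N) /\ in_Aq E istar q.+1 (tau t' k').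

Definition level_on_window m q : Prop :=
  forall s j, dom s j -> tq q <= s -> (kq q <= j <= kq q.+1 - 1)%N ->
    in_Aq E istar m (tau s j).

Lemma jump_times_after_tq q t j : (q < qs)%N ->
  jump_times_upto dom (tq q.+1) (kq q.+1) t -> (kq q <= j <= kq q.+1 - 1)%N -> tq q <= t j.
Proof.
move=> hq jt hj; have [_ hmin] := tq_min (q := q) ltac:(lia).
have e := kq_succ q; have hls := lstar_ge_2N istar r01.
have st := jump_times_step jt (j := kq q) ltac:(lia).
have ha : tq q <= t (kq q).
  apply: hmin; first by apply: (jump_times_ge0 jt); lia.
  by apply: (jump_times_dom jt (j := kq q)); [lia | lra].
by have := jump_times_mono jt (i := kq q) (j := j) ltac:(lia) ltac:(lia); lra.
Qed.

Lemma window_next_level q t : (q < qs)%N -> level_on_window q q ->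
  jump_times_upto dom (tq q.+1) (kq q.+1) t ->
  exists2 j, (kq q <= j <= kq q.+1 - 1)%N &
    in_Aq E istar q.+1 (tau (t j) j) \/ in_Aq E istar q.+1 (tau (t j.+1) j).
Proof.
move=> hq hlev jt; have e := kq_succ q; have hls := lstar_ge_2N istar r01.
have hJ j : (j <= kq q.+1 - 1)%N -> (j <= kq q.+1)%N by lia.
have step j : (j <= kq q.+1 - 1)%N -> t j <= t j.+1 by move=> hj; exact: (jump_times_step jt (hJ j hj)).
pose fires_at j f := (kq q <= j < kq q.+1 - 1)%N ->
  [/\ tau (t j.+1) j f = 1, tau (t j.+1) j.+1 f = 0 & forall b : 'I_N, b != f ->
    Defs.Rset r (Gq E istar q) f b (tau (t j.+1) j) (tau (t j.+1) j.+1 b)].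
have [fi hfi] : exists fi, forall j, fires_at j (fi j).
  apply: choice => j; rewrite /fires_at.
  case: (boolP (kq q <= j < kq q.+1 - 1)%N) => hj; last by exists istar => hj'; case/negP: hj.
  have [_ [i [yi [gi hR]]]] := proj2 (jump_times_jump sol lam0 jt (j := j) ltac:(lia)).
  exists i => _; split=> // b hb; apply: (Rset_eq_edge _ (hR b hb)).
  by apply: stage_edges; lia.
apply: (discrete_run_next_level r01 (X := fun j => tau (t j) j) (Y := fun j => tau (t j.+1) j) (fi := fi)).
- lia.
- move=> j hj; exists ((t j.+1 - t j) / T) => [|b].
    by apply: Rmult_le_pos; [have := step j ltac:(lia); lra | apply: Rlt_le; apply: Rinv_0_lt_compat].
  by rewrite (jump_times_flow sol jt b (hJ j ltac:(lia))) //; have := step j ltac:(lia); lra.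
- by move=> j hj; split; apply: (jump_times_cube Tpos sol lam0 jt (hJ j ltac:(lia))); have := step j ltac:(lia); lra.
- exact: hfi.
- move=> j hj; apply: hlev; [apply: (jump_times_dom jt (hJ j ltac:(lia))) | apply: (jump_times_after_tq hq jt) | ]; try lia.
  by have := step j ltac:(lia); lra.
Qed.

Lemma window_witness q : (q < qs)%N -> level_on_window q q -> exists t' k', witness q t' k'.
Proof.
move=> hq hlev; have [hdq1 _] := tq_min (q := q.+1) hq.
have [t jt] := jump_times_exist sol hdq1.
have [j hj hA] := window_next_level hq hlev jt.
have hJ : (j <= kq q.+1)%N by lia.
have st := jump_times_step jt hJ; have tj := jump_times_after_tq hq jt hj.
have bound s : t j <= s <= t j.+1 -> dom s j /\ s <= tq q.+1.
  by move=> hs; split; [apply: (jump_times_dom jt hJ) | apply: (jump_times_le jt hJ)].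
case: hA => hA; [exists (t j), j | exists (t j.+1), j];
  [have [? ?] := bound (t j) ltac:(lra) | have [? ?] := bound (t j.+1) ltac:(lra)];
  by split=> //; split; [split; [lra | lia] | split; [split; [lra | lia] |]].
Qed.

Lemma witness_exists q : (q < qs)%N -> exists t' k', witness q t' k'.
Proof.
elim: q => [|q IH] hq.
  by apply: window_witness => // s j hd _ _; apply: Aq0; apply: (dom_cube Tpos sol lam0 hd).
have [t' [k' [hd [[h1 h2] [[h3 h4] hA]]]]] := IH (ltnW hq).
apply: window_witness => // s j hds hs hj.
apply: (Aq_forward Tpos r01 sol lam0 hd hds _ _ _ hA); [lra | lia | move=> l hl].
by apply: (no_edge_entering_two_stages (q := q)) => //; have := kq_succ q.+1; lia.
Qed.

Hypothesis root : is_root E istar.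
Hypothesis max_dist : is_max_dist E istar qs.

Lemma witness_persists q t' k' : (q < qs)%N -> witness q t' k' ->
  forall t k, dom t k -> t' <= t -> (k' <= k)%N -> in_Aq E istar q.+1 (tau t k).
Proof.
move=> hq; move: {2}(qs - q)%N (erefl (qs - q)%N) => n; elim: n q t' k' hq => [|n IH] q t' k' hq hn //.
  by lia.
move=> [hd [[h1 h2] [[h3 h4] hA]]] t k hdk htt hkk.
have e1 := kq_succ q; have e2 := kq_succ q.+1.
case: n IH hn => [_ hn | n IH hn].
  apply: (Aq_forward Tpos r01 sol lam0 hd hdk htt hkk _ hA) => l _ a b _ _.
  by rewrite (_ : q.+1 = qs); [apply: Uq_max_dist | lia].
case: (ltnP k (kq q.+2)) => hk.
  apply: (Aq_forward Tpos r01 sol lam0 hd hdk htt hkk _ hA) => l hl.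
  by apply: (no_edge_entering_two_stages (q := q)); lia.
have [t'' [k'' hw]] := witness_exists (q := q.+1) ltac:(lia).
have [_ [_ [[h3' h4'] _]]] := hw.
have [s' [hs' hds']] := dom_lower sol hdk hk.
have [_ hmin2] := tq_min (q := q.+2) ltac:(lia).
have := hmin2 s' ltac:(lra) hds' => h2'.
apply: Aq_mono; apply: (IH q.+1 t'' k'') => //; [lia | lia | lra | lia].
Qed.

End Stages.

Theorem proposition1 (N : nat) (E : rel 'I_N) (T : R) (r : 'I_N -> R)
    (istar : 'I_N) (xi : nat -> 'I_N -> 'I_N -> Prop) (k0 qs : nat)
    (dom : R -> nat -> Prop) (tau : R -> nat -> 'I_N -> R)
    (lam : R -> nat -> nat) (tq : nat -> R) :
  irreflexive E ->
  is_root E istar ->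
  0 < T ->
  (forall i, 0 < r i < 1) ->
  in_Xi E xi ->
  is_max_dist E istar qs ->
  (1 <= k0)%nat ->
  sync_at E istar qs (lstar r) xi k0 ->
  is_maximal_solution T r xi dom tau lam ->
  lam 0 O = O ->
  in_unit_cube (tau 0 O) ->
  (forall q, (q <= qs)%nat -> is_min_time dom (k0 + q * lstar r)%nat (tq q)) ->
  forall q, (q < qs)%nat ->
    exists t' k',
      dom t' k' /\
      (tq q <= t' /\ (k0 + q * lstar r <= k')%nat) /\
      (t' <= tq q.+1 /\ (k' <= k0 + q.+1 * lstar r - 1)%nat) /\
      in_Aq E istar q.+1 (tau t' k') /\
      (forall t k, dom t k -> t' <= t -> (k' <= k)%nat ->
         in_Aq E istar q.+1 (tau t k)).
Proof.
move=> _ root Tpos r01 _ max_dist _ sync [sol _] lam0 _ tq_min q hq.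
have [t' [k' hw]] := witness_exists Tpos r01 sync sol lam0 tq_min hq.
exists t', k'; have [hd [hlo [hhi hA]]] := hw; do 4!split=> //.
by have := witness_persists Tpos r01 sync sol lam0 tq_min root max_dist hq hw.
Qed.
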